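(* Let $d>0$, let $\mathcal{S}$ be the 4-PAM constellation, and let $\mathcal{B}\subset\{0,1\}^{2N}$ be a binary linear code with at least two codewords. (i) If $\mathcal{S}$ is labeled by $\boldsymbol{q}=[0,1,3,2]$ and $\mathcal{B}$ contains a codeword $\boldsymbol{b}''$ with $b''_2[k]=1$ for all $k=1,\dots,N$, then $\mathsf{L}(\mathcal{B})=0$. (ii) If $\mathcal{S}$ is labeled by $\boldsymbol{q}=[0,2,3,1]$ and $\mathcal{B}$ contains a codeword $\boldsymbol{b}''$ with $b''_1[k]=1$ for all $k=1,\dots,N$, then $\mathsf{L}(\mathcal{B})=0$.
   Context: $\mathcal{S}=\{s_1,s_2,s_3,s_4\}$ with $s_1=-3d$, $s_2=-d$, $s_3=d$, $s_4=3d$. A labeling is a bijection $\Phi_{\mathcal{S}}:\{0,1\}^2\to\mathcal{S}$, described by $\boldsymbol{q}=[q_1,\dots,q_4]$ where $q_i$ is the integer whose two-bit representation $[b_1,b_2]$ (most significant bit $b_1$ first) is $\Phi_{\mathcal{S}}^{-1}(s_i)$. A codeword of $\mathcal{B}$ is written $\boldsymbol{b}=[\boldsymbol{b}[1],\dots,\boldsymbol{b}[N]]$ with $\boldsymbol{b}[k]=[b_1[k],b_2[k]]$, and the CM code is $\mathcal{X}=\{[\Phi_{\mathcal{S}}(\boldsymbol{b}[1]),\dots,\Phi_{\mathcal{S}}(\boldsymbol{b}[N])]:\boldsymbol{b}\in\mathcal{B}\}$. For $\boldsymbol{x},\hat{\boldsymbol{x}}\in\mathcal{S}^N$ and each $k$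 with $x[k]\neq\hat{x}[k]$: $\mu^{\mathcal{X}}_k=\sigma^{2,\mathcal{X}}_k=(x[k]-\hat{x}[k])^2/(4d^2)$; $\mu^{\mathcal{B}}_k=\sigma^{2,\mathcal{B}}_k=(x[k]-\hat{x}[k])^2/(4d^2)$ except that if $\{x[k],\hat{x}[k]\}=\{s_1,s_4\}$ then $\mu^{\mathcal{B}}_k=3$, $\sigma^{2,\mathcal{B}}_k=1$. Summing over $k$ with $x[k]\neq\hat{x}[k]$, $a^{\mathcal{X}}(\boldsymbol{x},\hat{\boldsymbol{x}})=\sum_k\mu^{\mathcal{X}}_k/\sqrt{\sum_k\sigma^{2,\mathcal{X}}_k}$ and $a^{\mathcal{B}}(\boldsymbol{x},\hat{\boldsymbol{x}})=\sum_k\mu^{\mathcal{B}}_k/\sqrt{\sum_k\sigma^{2,\mathcal{B}}_k}$ (normalized distances of the symbol-wise ML decoder and of the bit-wise max-log decoder under the zero-crossing approximation). The asymptotic loss of the code is $\mathsf{L}(\mathcal{B})=20\log_{10}\Big(\min_{\boldsymbol{x}\neq\hat{\boldsymbol{x}}\in\mathcal{X}}a^{\mathcal{X}}(\boldsymbol{x},\hat{\boldsymbol{x}})\big/\min_{\boldsymbol{x}\neq\hat{\boldsymbol{x}}\in\mathcal{X}}a^{\mathcal{B}}(\boldsymbol{x},\hat{\boldsymbol{x}})\Big)$ dB. *)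

From HB Require Import structures.
From mathcomp Require Import all_boot all_order all_algebra.
From mathcomp Require Import reals exp.
Set Implicit Arguments.
Unset Strict Implicit.
Unset Printing Implicit Defensive.
Import Order.TTheory GRing.Theory Num.Theory.
Local Open Scope ring_scope.

Section CM.
Variable R : realType.

(* A binary word of length 2N, organised as N bit pairs b[k] = (b1[k], b2[k]). *)
Definition bword (N : nat) := {ffun 'I_N -> bool * bool}.

Definition linear_code (N : nat) (B : {set bword N}) : Prop :=
  [ffun=> (false, false)] \in B /\
  forall b b' : bword N, b \in B -> b' \in B ->
    [ffun k => (xorb (b k).1 (b' k).1, xorb (b k).2 (b' k).2)] \in B.

(* 4-PAM symbols s_1..s_4 = -3d,-d,d,3d, indexed here by i = 0..3 (s_{i+1}). *)
Definition pam (d : R) (i : nat) : R := ((2 * i)%:R - 3) * d.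

(* Labeling q = [q_1;..;q_4]: the pair [b1,b2] (b1 MSB) is mapped to s_i,
   where q_i = 2 b1 + b2. *)
Definition Phi (d : R) (q : seq nat) (b : bool * bool) : R :=
  pam d (index (2 * b.1 + b.2)%N q).

Definition cm_word (d : R) (q : seq nat) (N : nat) (b : bword N)
  : {ffun 'I_N -> R} := [ffun k => Phi d q (b k)].

Definition cm_code (d : R) (q : seq nat) (N : nat) (B : {set bword N})
  : seq {ffun 'I_N -> R} := [seq cm_word d q b | b <- enum B].

Definition muX (d x xh : R) : R := (x - xh) ^+ 2 / (4 * d ^+ 2).
Definition sigX (d x xh : R) : R := (x - xh) ^+ 2 / (4 * d ^+ 2).
Definition is_s1s4 (d x xh : R) : bool :=
  ((x == pam d 0) && (xh == pam d 3)) || ((x == pam d 3) && (xh == pam d 0)).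
Definition muB (d x xh : R) : R := if is_s1s4 d x xh then 3 else muX d x xh.
Definition sigB (d x xh : R) : R := if is_s1s4 d x xh then 1 else sigX d x xh.

Definition aX (d : R) (N : nat) (x xh : {ffun 'I_N -> R}) : R :=
  (\sum_(k | x k != xh k) muX d (x k) (xh k)) /
    Num.sqrt (\sum_(k | x k != xh k) sigX d (x k) (xh k)).
Definition aB (d : R) (N : nat) (x xh : {ffun 'I_N -> R}) : R :=
  (\sum_(k | x k != xh k) muB d (x k) (xh k)) /
    Num.sqrt (\sum_(k | x k != xh k) sigB d (x k) (xh k)).

Definition seqmin (s : seq R) : R := foldr Num.min (head 0 s) s.

Definition distinct_pairs (N : nat) (X : seq {ffun 'I_N -> R}) :=
  [seq p <- [seq (x, xh) | x <- X, xh <- X] | p.1 != p.2].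

Definition min_aX (d : R) (q : seq nat) (N : nat) (B : {set bword N}) : R :=
  seqmin [seq aX d p.1 p.2 | p <- distinct_pairs (cm_code d q B)].
Definition min_aB (d : R) (q : seq nat) (N : nat) (B : {set bword N}) : R :=
  seqmin [seq aB d p.1 p.2 | p <- distinct_pairs (cm_code d q B)].

Definition log10 (x : R) : R := ln x / ln 10.

Definition asym_loss (d : R) (q : seq nat) (N : nat) (B : {set bword N}) : R :=
  20 * log10 (min_aX d q B / min_aB d q B).

End CM.

(* To a distinct pair x = Phi(b), x' = Phi(b') of CM codewords associate the
   companion pair y = Phi(b''), y' = Phi(b + b' + b''), where b'' is the
   codeword whose bits in the sensitive position are all 1.  For these Gray
   labelings the companion differs from x, x' in the same coordinates, never
   contains an {s_1, s_4} coordinate, and its squared distance in each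
   coordinate equals sigma^B of the corresponding coordinate of (x, x').
   Hence a^X(y, y') = a^B(y, y') = sqrt(sum_k sigma^B_k), which is at most
   both a^B(x, x') and a^X(x, x').  So each minimum is bounded by the other,
   and the loss is 20 log10 1 = 0. *)
From HB Require Import structures.
From mathcomp Require Import all_boot all_order all_algebra.
From mathcomp Require Import reals exp.
From mathcomp Require Import ring lra.
Import Order.TTheory GRing.Theory Num.Theory.
Local Open Scope ring_scope.
Set Implicit Arguments.
Unset Strict Implicit.

Section RealFacts.
Variable R : realType.

Lemma seqmin_le (s : seq R) x : x \in s -> seqmin s <= x.
Proof.
rewrite /seqmin; elim: s (head 0 s) => //= a t IH z.
by rewrite in_cons ge_min => /orP [/eqP ->|/IH ->]; rewrite ?lexx ?orbT.
Qed.

Lemma seqmin_mem (s : seq R) : s != [::] -> seqmin s \in s.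
Proof.
case: s => // a t _; rewrite /seqmin /=.
suff : foldr Num.min a t \in a :: t.
  by case: leP => _ //; rewrite mem_head.
elim: t => [|c t IH] /=; first exact: mem_head.
rewrite !in_cons; case: leP => _; first by rewrite eqxx orbT.
by move: IH; rewrite in_cons => /orP [->|->]; rewrite ?orbT.
Qed.

Lemma le_seqmin_map (T : eqType) (f g : T -> R) (s : seq T) :
  (forall p, p \in s -> exists2 p', p' \in s & f p' <= g p) ->
  seqmin (map f s) <= seqmin (map g s).
Proof.
move=> fg; have [->|s_neq0] := eqVneq s [::]; first by [].
have /seqmin_mem/mapP [p ps ->] : map g s != [::] by rewrite -size_eq0 size_map size_eq0.
by have [p' p's /(le_trans _)] := fg p ps; apply; apply/seqmin_le/map_f.
Qed.

Lemma divr_sqrt (a : R) : 0 <= a -> a / Num.sqrt a = Num.sqrt a.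
Proof.
move=> a_ge0; have [->|a_neq0] := eqVneq a 0; first by rewrite sqrtr0 mul0r.
have sqrt_neq0 : Num.sqrt a != 0 by rewrite sqrtr_eq0 -ltNge lt_def a_neq0.
by rewrite -{1}(sqr_sqrtr a_ge0) expr2 mulfK.
Qed.

Lemma sqrt_le_divr_sqrt (a b : R) : 0 <= a -> a <= b -> Num.sqrt a <= b / Num.sqrt a.
Proof.
move=> a_ge0 ab; rewrite -{1}divr_sqrt //.
by apply: ler_wpM2r; rewrite ?invr_ge0 ?sqrtr_ge0.
Qed.

End RealFacts.

Section Distances.
Variables (R : realType) (d : R).
Hypothesis d_neq0 : d != 0.

Lemma sigX_ge0 x xh : 0 <= sigX d x xh.
Proof. by rewrite /sigX divr_ge0 ?sqr_ge0 // mulr_ge0 ?sqr_ge0. Qed.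

Lemma sigB_ge0 x xh : 0 <= sigB d x xh.
Proof. by rewrite /sigB; case: ifP => _; rewrite ?ler01 ?sigX_ge0. Qed.

Lemma sigB_le_muB x xh : sigB d x xh <= muB d x xh.
Proof. by rewrite /sigB /muB; case: ifP => _ //; lra. Qed.

Lemma sigX_pam i j : sigX d (pam d i) (pam d j) = (i%:R - j%:R) ^+ 2.
Proof. by rewrite /sigX /pam !natrM; field. Qed.

Lemma sigB_le_sigX x xh : sigB d x xh <= sigX d x xh.
Proof.
rewrite /sigB /is_s1s4; case: ifP => [|_] //.
by case/orP => /andP [/eqP -> /eqP ->]; rewrite sigX_pam; lra.
Qed.

Lemma pam_inj : injective (pam d).
Proof.
move=> i j /(mulIf d_neq0)/addIr/eqP.
by rewrite eqr_nat eqn_pmul2l // => /eqP.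
Qed.

Lemma is_s1s4_pam i j : is_s1s4 d (pam d i) (pam d j) =
  ((i == 0) && (j == 3)) || ((i == 3) && (j == 0)).
Proof. by rewrite /is_s1s4 !(inj_eq pam_inj). Qed.

Variable N : nat.
Implicit Types x xh y yh : {ffun 'I_N -> R}.

Lemma aXE x xh : aX d x xh = Num.sqrt (\sum_(k | x k != xh k) sigX d (x k) (xh k)).
Proof. by rewrite /aX divr_sqrt // sumr_ge0 // => k _; apply: sigX_ge0. Qed.

Lemma aB_eq_aX x xh : (forall k, ~~ is_s1s4 d (x k) (xh k)) -> aB d x xh = aX d x xh.
Proof.
by move=> no14; congr (_ / Num.sqrt _); apply: eq_bigr => k _;
  rewrite /muB /sigB (negbTE (no14 k)).
Qed.

Lemma sqrt_sum_sigB_le_aB x xh :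
  Num.sqrt (\sum_(k | x k != xh k) sigB d (x k) (xh k)) <= aB d x xh.
Proof.
apply: sqrt_le_divr_sqrt; first by rewrite sumr_ge0 // => k _; apply: sigB_ge0.
by apply: ler_sum => k _; apply: sigB_le_muB.
Qed.

Lemma sqrt_sum_sigB_le_aX x xh :
  Num.sqrt (\sum_(k | x k != xh k) sigB d (x k) (xh k)) <= aX d x xh.
Proof. by rewrite aXE ler_wsqrtr // ler_sum // => k _; apply: sigB_le_sigX. Qed.

Definition companion_symbols (x xh y yh : R) :=
  [/\ (x != xh) = (y != yh), ~~ is_s1s4 d y yh & sigX d y yh = sigB d x xh].

Lemma companion_le x xh y yh :
  (forall k, companion_symbols (x k) (xh k) (y k) (yh k)) -> x != xh ->
  [/\ y != yh, aX d y yh <= aB d x xh & aB d y yh <= aX d x xh].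
Proof.
move=> comp x_neq; have supp k : (y k != yh k) = (x k != xh k) by case: (comp k).
have aXy : aX d y yh = Num.sqrt (\sum_(k | x k != xh k) sigB d (x k) (xh k)).
  rewrite aXE (eq_bigl _ _ supp); congr Num.sqrt.
  by apply: eq_bigr => k _; case: (comp k).
have aBy : aB d y yh = aX d y yh by apply: aB_eq_aX => k; case: (comp k).
split; rewrite ?aBy ?aXy ?sqrt_sum_sigB_le_aB ?sqrt_sum_sigB_le_aX //.
apply: contra x_neq => /eqP y_eq; apply/eqP/ffunP => k.
by apply/eqP; rewrite -[_ == _]negbK -supp y_eq eqxx.
Qed.

End Distances.

Definition xor_bits (u v : bool * bool) := (xorb u.1 v.1, xorb u.2 v.2).

Definition xor_word N (b b' : bword N) : bword N :=
  [ffun k => xor_bits (b k) (b' k)].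

Lemma linear_code_xor N (B : {set bword N}) b b' :
  linear_code B -> b \in B -> b' \in B -> xor_word b b' \in B.
Proof. by case=> _ xorB; apply: xorB. Qed.

Local Notation q0132 := [:: 0; 1; 3; 2]%N.
Local Notation q0231 := [:: 0; 2; 3; 1]%N.

Section Companion.
Variables (R : realType) (d : R).
Hypothesis d_neq0 : d != 0.

Ltac pam_cases :=
  rewrite /companion_symbols /Phi /sigB /= ?(inj_eq (pam_inj d_neq0))
    ?is_s1s4_pam //= ?sigX_pam //; split => //; lra.

Lemma companion_symbols_0132 (u v w : bool * bool) : w.2 ->
  companion_symbols d (Phi d q0132 u) (Phi d q0132 v) (Phi d q0132 w)
    (Phi d q0132 (xor_bits (xor_bits u v) w)).
Proof.
by case: w => [[] []] //= _; case: u => [[] []]; case: v => [[] []]; pam_cases.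
Qed.

Lemma companion_symbols_0231 (u v w : bool * bool) : w.1 ->
  companion_symbols d (Phi d q0231 u) (Phi d q0231 v) (Phi d q0231 w)
    (Phi d q0231 (xor_bits (xor_bits u v) w)).
Proof.
by case: w => [[] []] //= _; case: u => [[] []]; case: v => [[] []]; pam_cases.
Qed.

Variables (q : seq nat) (sel : bool * bool -> bool).
Hypothesis companion_q : forall u v w, sel w ->
  companion_symbols d (Phi d q u) (Phi d q v) (Phi d q w)
    (Phi d q (xor_bits (xor_bits u v) w)).

Lemma min_aX_eq_min_aB N (B : {set bword N}) (b'' : bword N) :
  linear_code B -> b'' \in B -> (forall k, sel (b'' k)) ->
  min_aX d q B = min_aB d q B.
Proof.
move=> linB b''B selb''.
pose L := distinct_pairs (cm_code d q B).
have companion p : p \in L -> exists2 p', p' \in L &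
    aX d p'.1 p'.2 <= aB d p.1 p.2 /\ aB d p'.1 p'.2 <= aX d p.1 p.2.
  case: p => x xh; rewrite mem_filter /=.
  case/andP=> x_neq /allpairsP [[x1 xh1] [/= xB xhB [ex exh]]]; subst x1 xh1.
  case/mapP: xB x_neq => b; rewrite mem_enum => bB ->.
  case/mapP: xhB => b'; rewrite mem_enum => b'B -> x_neq.
  pose y := cm_word d q b''; pose yh := cm_word d q (xor_word (xor_word b b') b'').
  have comp k : companion_symbols d (cm_word d q b k) (cm_word d q b' k) (y k) (yh k).
    by rewrite !ffunE; apply: companion_q.
  have [y_neq le1 le2] := companion_le d_neq0 comp x_neq.
  exists (y, yh) => //.
  rewrite mem_filter /= y_neq; apply: allpairs_f; apply: map_f; rewrite mem_enum //.
  by rewrite !linear_code_xor.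
apply: le_anti; rewrite !le_seqmin_map // => p /companion [p' ? []]; by exists p'.
Qed.

End Companion.

Lemma asym_loss_eq0 (R : realType) (d : R) q N (B : {set bword N}) :
  min_aX d q B = min_aB d q B -> asym_loss d q B = 0.
Proof.
rewrite /asym_loss /log10 => ->; have [->|m_neq0] := eqVneq (min_aB d q B) 0.
  by rewrite mul0r ln0 // mul0r mulr0.
by rewrite divff // ln1 mul0r mulr0.
Qed.

Theorem theorem3 (R : realType) (d : R) (N : nat) (B : {set bword N}) :
  0 < d -> linear_code B -> (1 < #|B|)%N ->
  ((exists2 b'' : bword N, b'' \in B & forall k : 'I_N, (b'' k).2 = true) ->
     asym_loss d [:: 0; 1; 3; 2]%N B = 0) /\
  ((exists2 b'' : bword N, b'' \in B & forall k : 'I_N, (b'' k).1 = true) ->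
     asym_loss d [:: 0; 2; 3; 1]%N B = 0).
Proof.
move=> /lt0r_neq0 d_neq0 linB _; split=> -[b'' b''B selb'']; apply: asym_loss_eq0.
- exact: @min_aX_eq_min_aB _ _ d_neq0 _ (fun w => w.2)
    (companion_symbols_0132 d_neq0) _ _ _ linB b''B selb''.
- exact: @min_aX_eq_min_aB _ _ d_neq0 _ (fun w => w.1)
    (companion_symbols_0231 d_neq0) _ _ _ linB b''B selb''.
Qed.
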